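(* Let $\lambda$ be a partition with at most $n$ parts and $\mu\in S_n(\lambda)$. Then $f^*_\mu\in V^*_\lambda$.
   Context: Polynomials are in $x_1,\dots,x_n$ over $\mathbb{Q}(q,t)$; $\mathcal{P}_n^{(d)}$ denotes polynomials of degree at most $d$. For $\mu\in\mathbb{N}^n$ let $k_i(\mu)=\#\{j<i:\mu_j>\mu_i\}+\#\{j>i:\mu_j\ge\mu_i\}$ and $\widetilde\mu=(q^{\mu_1}t^{-k_1(\mu)},\dots,q^{\mu_n}t^{-k_n(\mu)})$. For $\mu\in\mathbb{N}^n$, $|\mu|=d$, $E^*_\mu$ is the unique polynomial in $\mathcal{P}_n^{(d)}$ with coefficient of $x^\mu$ equal to $1$ and $E^*_\mu(\widetilde\nu)=0$ for all $\nu\in\mathbb{N}^n$, $|\nu|\le d$, $\nu\ne\mu$. $S_n$ acts on compositions by $\sigma\cdot\mu=(\mu_{\sigma^{-1}(1)},\dots,\mu_{\sigma^{-1}(n)})$ and on polynomials by permuting variables; $s_i=(i,i+1)$; $T_i=t-\frac{tx_i-x_{i+1}}{x_i-x_{i+1}}(1-s_i)$; $T_\sigma=T_{i_1}\cdots T_{i_\ell}$ for a reduced word $\sigma=s_{i_1}\cdots s_{i_\ell}$. $S_n(\lambda)$ is the set of rearrangements of $\lambda$; for $\mu\in S_n(\lambda)$, $\sigma_\mu$ is the shortest permutation with $\sigma_\mu(\lambda)=\mu$ and $f^*_\mu=T_{\sigma_\mu}E^*_\lambda$. For a partition $\lambda$ of size $d$, $V^*_\lambda=\{f\in\mathcal{P}_n^{(d)}: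 f(\widetilde\nu)=0\ \forall\nu\in\mathbb{N}^n, |\nu|\le|\lambda|, \nu\notin S_n(\lambda)\}$. *)

From HB Require Import structures.
From mathcomp Require Import all_boot all_order all_algebra all_fingroup.
From mathcomp Require Import fraction.
From mathcomp.multinomials Require Import mpoly.
From Stdlib Require Import ClassicalEpsilon.

Set Implicit Arguments.
Unset Strict Implicit.
Unset Printing Implicit Defensive.

Import Order.TTheory GRing.Theory.
Local Open Scope ring_scope.

(* The base field Q(q,t) = Frac(Q[q][t]). *)
Definition K : fieldType := {fraction {poly {poly rat}}}.
Definition qK : K := FracField.tofrac ((('X : {poly rat})%:P) : {poly {poly rat}}).
Definition tK : K := FracField.tofrac ('X : {poly {poly rat}}).

Section Defs.
Variable n : nat.

Definition kidx (mu : 'X_{1..n}) (i : 'I_n) : nat :=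
  #|[pred j : 'I_n | ((j < i)%N && (mu i < mu j)%N) || ((i < j)%N && (mu i <= mu j)%N)]|.

Definition tilde (mu : 'X_{1..n}) : 'I_n -> K :=
  fun i => qK ^+ (mu i) * tK ^- (kidx mu i).

Definition deg_le (d : nat) (f : {mpoly K[n]}) : Prop := (msize f <= d.+1)%N.

Definition is_Estar (lam : 'X_{1..n}) (E : {mpoly K[n]}) : Prop :=
  [/\ deg_le (mdeg lam) E, E@_lam = 1 &
      forall nu : 'X_{1..n}, (mdeg nu <= mdeg lam)%N -> nu != lam ->
        E.@[tilde nu] = 0].

Definition is_partition (lam : 'X_{1..n}) : Prop :=
  forall i j : 'I_n, (i <= j)%N -> (lam j <= lam i)%N.

Definition cact (s : 'S_n) (mu : 'X_{1..n}) : 'X_{1..n} :=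
  [multinom mu ((s^-1)%g j) | j < n].

(* Coxeter length = number of inversions *)
Definition inversions (s : 'S_n) : nat :=
  #|[pred ij : 'I_n * 'I_n | (ij.1 < ij.2)%N && (s ij.2 < s ij.1)%N]|.

(* the index i+1 (only meaningful when i.+1 < n) *)
Definition nextI (i : 'I_n) : 'I_n := insubd i i.+1.

Definition sgen (i : 'I_n) : 'S_n := tperm i (nextI i).

Definition valid_word (w : seq 'I_n) : bool := all (fun i : 'I_n => (i.+1 < n)%N) w.

(* s_{i1} \o s_{i2} \o ... \o s_{il} as a function (mathcomp: (p * q) x = q (p x)) *)
Definition perm_of_word (w : seq 'I_n) : 'S_n :=
  foldr (fun i p => (p * sgen i)%g) 1%g w.

Definition reduced_word (s : 'S_n) (w : seq 'I_n) : Prop :=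
  [/\ valid_word w, perm_of_word w = s & size w = inversions s].

Definition is_sigma_mu (lam mu : 'X_{1..n}) (s : 'S_n) : Prop :=
  cact s lam = mu /\ forall s', cact s' lam = mu -> (inversions s <= inversions s')%N.

Definition spoly (i : 'I_n) (f : {mpoly K[n]}) : {mpoly K[n]} := msym (sgen i) f.

(* the divided-difference part of T_i: the polynomial
   (t x_i - x_{i+1}) / (x_i - x_{i+1}) * (1 - s_i) f *)
Definition Tdiv (i : 'I_n) (f : {mpoly K[n]}) : {mpoly K[n]} :=
  epsilon (inhabits 0) (fun g : {mpoly K[n]} =>
    ('X_i - 'X_(nextI i)) * g = (tK *: 'X_i - 'X_(nextI i)) * (f - spoly i f)).

Definition Top (i : 'I_n) (f : {mpoly K[n]}) : {mpoly K[n]} := tK *: f - Tdiv i f.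

Definition Tword (w : seq 'I_n) (f : {mpoly K[n]}) : {mpoly K[n]} :=
  foldr Top f w.

Definition inVstar (lam : 'X_{1..n}) (f : {mpoly K[n]}) : Prop :=
  deg_le (mdeg lam) f /\
  forall nu : 'X_{1..n}, (mdeg nu <= mdeg lam)%N ->
    ~ (exists s : 'S_n, cact s lam = nu) -> f.@[tilde nu] = 0.

End Defs.

(* Write j = i+1.  Then T_i f = t f - (t x_i - x_j) (f - s_i f) / (x_i - x_j), and the
   divided difference does not raise the degree, so T_i preserves the degree bound of V*_lam.
   Let nu lie outside S_n(lam) and let f in V*_lam, so f vanishes at nu~.  The coordinates
   nu~_i and nu~_j differ, and the divided difference vanishes at nu~: if nu_i = nu_j then
   nu~_j = t nu~_i kills the factor t x_i - x_j; otherwise nu~ composed with s_i is the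
   point (s_i nu)~, where f vanishes since s_i nu is also outside the orbit.  So V*_lam is
   stable under every T_i and contains E*_lam. *)

From mathcomp Require Import all_boot all_algebra all_fingroup.
From mathcomp Require Import fraction zify.
From mathcomp.multinomials Require Import mpoly.
From Stdlib Require Import ClassicalEpsilon.

Set Implicit Arguments.
Unset Strict Implicit.
Unset Printing Implicit Defensive.

Import GRing.Theory.
Local Open Scope ring_scope.

Section SymmetricAction.
Variable n : nat.

Lemma msymXU (R : nzRingType) (s : 'S_n) (k : 'I_n) :
  msym s ('X_k : {mpoly R[n]}) = 'X_(s k).
Proof. by rewrite /msym mmapX mmap1U. Qed.

Lemma msize_msym (R : nzRingType) (s : 'S_n) (p : {mpoly R[n]}) :
  (msize (msym s p) <= msize p)%N.
Proof.
rewrite [X in (X <= _)%N]msizeE; apply/bigmax_leqP_seq => m + _.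
by rewrite mcoeff_msupp mcoeff_sym -mcoeff_msupp => /msize_mdeg_lt; rewrite mdeg_mperm.
Qed.

Lemma meval_msym (R : comNzRingType) (s : 'S_n) (p : {mpoly R[n]}) (x : 'I_n -> R) :
  (msym s p).@[x] = p.@[x \o s].
Proof.
rewrite -[msym s p]comp_mpoly_id msym_mPo comp_mpoly_meval.
by apply: meval_eq => k; rewrite !tnth_mktuple mevalXU.
Qed.

Lemma msym_tperm_subr_dvd (R : comNzRingType) (i j : 'I_n) (f : {mpoly R[n]}) :
  exists h, ('X_i - 'X_j) * h = f - msym (tperm i j) f.
Proof.
pose dvd (g : {mpoly R[n]}) := exists h, ('X_i - 'X_j) * h = g - msym (tperm i j) g.
have dvd0 : dvd 0 by exists 0; rewrite mulr0 msym0 subrr.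
have dvd1 : dvd 1 by exists 0; rewrite mulr0 msym1 subrr.
have dvdM g1 g2 : dvd g1 -> dvd g2 -> dvd (g1 * g2).
  move=> [h1 e1] [h2 e2]; exists (g1 * h2 + h1 * msym (tperm i j) g2).
  by rewrite msymM mulrDr mulrCA e2 mulrA e1 mulrBr mulrBl addrA subrK.
have dvdXU k : dvd 'X_k.
  rewrite /dvd msymXU; case: tpermP => [->|->|_ _].
  - by exists 1; rewrite mulr1.
  - by exists (-1); rewrite mulrN1 opprB.
  - by exists 0; rewrite mulr0 subrr.
have dvdX m : dvd 'X_[m].
  rewrite mpolyXE_id; apply: (big_ind dvd) => // k _.
  by elim: (m k) => [|e IHe]; rewrite ?expr0 // exprS; apply: dvdM.
elim/mpolyind: f => // c m p _ _ [h e]; have [hm em] := dvdX m.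
exists (c *: hm + h); rewrite msymD msymZ mulrDr -scalerAr em e.
by rewrite opprD addrACA -scalerBr.
Qed.

End SymmetricAction.

Lemma msize_le_of_mul_eq (R : idomainType) n (u v g w : {mpoly R[n]}) :
  u * g = v * w -> u != 0 -> (msize v <= msize u)%N -> (msize g <= msize w)%N.
Proof.
move=> e u0 vu; have [->|g0] := eqVneq g 0; first by rewrite msize0.
have : v * w != 0 by rewrite -e mulf_neq0.
rewrite mulf_eq0 negb_or => /andP[v0 w0].
have := congr1 (fun p => msize p) e; rewrite !msizeM //.
have : (0 < msize u)%N by rewrite lt0n msize_poly_eq0.
lia.
Qed.

Section Binomials.
Variables (R : nzRingType) (n : nat).

Lemma msize_scaleXU_subr_le (c : R) (i j : 'I_n) :
  (msize (c *: 'X_i - 'X_j : {mpoly R[n]}) <= 2)%N.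
Proof.
rewrite (leq_trans (msizeD_le _ _)) // msizeN geq_max msizeX mdeg1 andbT.
by rewrite (leq_trans (msizeZ_le _ _)) // msizeX mdeg1.
Qed.

Lemma msize_XU_subr_ge (i j : 'I_n) : i != j -> (2 <= msize ('X_i - 'X_j : {mpoly R[n]}))%N.
Proof.
move=> ij; have := @msize_mdeg_lt _ _ ('X_i - 'X_j : {mpoly R[n]}) U_(i).
rewrite mdeg1; apply; rewrite mcoeff_msupp mcoeffB !mcoeffXU eqxx.
by rewrite (eq_sym j) (negbTE ij) subr0 oner_neq0.
Qed.

End Binomials.

Lemma tK_neq0 : tK != 0.
Proof. by rewrite /tK tofrac_eq0 polyX_eq0. Qed.

Lemma qt_poly_monomial_inj a b k l :
  ('X%:P ^+ a * 'X ^+ l : {poly {poly rat}}) = 'X%:P ^+ b * 'X ^+ k -> a = b /\ k = l.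
Proof.
rewrite -!rmorphXn => /(congr1 (fun p : {poly {poly rat}} => p`_l)).
rewrite !coefCM !coefXn eqxx mulr1.
case: eqP => [->|_]; last by move/eqP; rewrite mulr0 expf_eq0 polyX_eq0 andbF.
by rewrite mulr1 => /(congr1 (fun p : {poly rat} => size p)); rewrite !size_polyXn => -[].
Qed.

Lemma qt_monomial_inj a b k l : qK ^+ a * tK ^- k = qK ^+ b * tK ^- l -> a = b /\ k = l.
Proof.
have tk_neq0 m : tK ^+ m != 0 by rewrite expf_neq0 // tK_neq0.
move=> /(congr1 (fun z => z * (tK ^+ k * tK ^+ l))).
rewrite -!mulrA mulKf // [tK ^+ k * _]mulrC mulKf // => e.
apply: qt_poly_monomial_inj; apply/eqP.
by rewrite -(tofrac_eq (R := {poly {poly rat}})) !rmorphM !rmorphXn /= e.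
Qed.

Section PermutationAction.
Variable n : nat.
Implicit Types (mu nu : 'X_{1..n}) (s : 'S_n).

Lemma cact1 mu : cact 1%g mu = mu.
Proof. by apply/mnmP => l; rewrite mnmE invg1 perm1. Qed.

Lemma cactM s1 s2 mu : cact (s1 * s2)%g mu = cact s2 (cact s1 mu).
Proof. by apply/mnmP => l; rewrite !mnmE invMg permM. Qed.

Lemma mdeg_cact s mu : mdeg (cact s mu) = mdeg mu.
Proof. exact: mdeg_mperm. Qed.

Lemma cact_orbit s' mu nu :
  (exists s, cact s mu = cact s' nu) -> exists s, cact s mu = nu.
Proof.
by case=> s e; exists (s * s'^-1)%g; rewrite cactM e -cactM mulgV cact1.
Qed.

Lemma card_preim_perm (s : 'S_n) (A : {pred 'I_n}) : #|[pred m | s m \in A]| = #|A|.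
Proof.
rewrite -[RHS](card_image (@perm_inj _ s^-1)); apply: eq_card => m.
rewrite inE; apply/idP/imageP => [sm|[m' m'A ->]]; last by rewrite permKV.
by exists (s m); rewrite ?permK.
Qed.

Lemma cact_sgenE (i : 'I_n) mu l : cact (sgen i) mu l = mu (sgen i l).
Proof. by rewrite mnmE tpermV. Qed.

End PermutationAction.

(* Tdiv is defined by choice; the divisibility lemma shows that its specification holds. *)
Lemma Tdiv_spec n (i : 'I_n) (f : {mpoly K[n]}) :
  ('X_i - 'X_(nextI i)) * Tdiv i f = (tK *: 'X_i - 'X_(nextI i)) * (f - spoly i f).
Proof.
apply: (epsilon_spec (inhabits 0) (fun g => ('X_i - 'X_(nextI i)) * g = _)).
have [h e] := msym_tperm_subr_dvd i (nextI i) f.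
by exists ((tK *: 'X_i - 'X_(nextI i)) * h); rewrite mulrCA e.
Qed.

Lemma meval_Tdiv n (i : 'I_n) (f : {mpoly K[n]}) (x : 'I_n -> K) :
  x i != x (nextI i) ->
  (Tdiv i f).@[x] =
    (tK * x i - x (nextI i)) * (f.@[x] - f.@[x \o sgen i]) / (x i - x (nextI i)).
Proof.
rewrite -subr_eq0 => xij; have := congr1 (meval x) (Tdiv_spec i f).
rewrite !mevalM !mevalB mevalZ !mevalXU /spoly meval_msym => <-.
by rewrite mulrAC mulfV // mul1r.
Qed.

Lemma kidxE n (mu : 'X_{1..n}) l :
  kidx mu l = #|[pred m : 'I_n | (mu l < mu m)%N || (mu l == mu m) && (l < m)%N]|.
Proof.
apply: eq_card => m; rewrite !inE.
have [ml|lm|/val_inj ->] := ltngtP m l; rewrite ?ltnn ?eqxx //=.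
- by rewrite andbF !orbF.
- by rewrite andbT orbC leq_eqVlt.
Qed.

Section AdjacentTransposition.
Variables (n : nat) (i : 'I_n).
Hypothesis lt_i1n : (i.+1 < n)%N.

Lemma val_nextI : nextI i = i.+1 :> nat.
Proof. by rewrite val_insubd lt_i1n. Qed.

Lemma nextI_neq : nextI i != i.
Proof. by rewrite -val_eqE /= val_nextI gtn_eqF. Qed.

Lemma val_sgen (l : 'I_n) :
  sgen i l = (if l == i :> nat then i.+1 else if l == i.+1 :> nat then i else l) :> nat.
Proof.
by rewrite /sgen; case: tpermP => [->|->|/eqP li /eqP lj]; rewrite -?val_nextI;
  rewrite ?eqxx ?(inj_eq val_inj) ?(negbTE li) ?(negbTE lj) ?(negbTE nextI_neq).
Qed.

Lemma ltn_sgen (l m : 'I_n) : ~ (l = i /\ m = nextI i) -> ~ (l = nextI i /\ m = i) ->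
  (sgen i l < sgen i m)%N = (l < m)%N.
Proof.
rewrite !val_sgen -!val_nextI !(rwP eqP) -!(inj_eq val_inj) => /= not_ij not_ji.
move: not_ij not_ji; rewrite val_nextI; do 4 case: eqP => /=; lia.
Qed.

Lemma kidx_sgen_eq (mu : 'X_{1..n}) :
  mu i = mu (nextI i) -> kidx mu i = (kidx mu (nextI i)).+1.
Proof.
move=> e; have ej := val_nextI.
rewrite !kidxE (cardD1 (nextI i)) inE e ltnn eqxx ej leqnn /= add1n; congr _.+1.
apply: eq_card => m; rewrite !inE.
have [->|nm] := eqVneq m (nextI i); first by rewrite /= ltnn ej ltnn andbF orbF.
rewrite /=; congr (_ || (_ && _)).
move: nm; rewrite -val_eqE /= ej; lia.
Qed.

Lemma kidx_cact_sgen (mu : 'X_{1..n}) l : mu i != mu (nextI i) ->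
  kidx (cact (sgen i) mu) l = kidx mu (sgen i l).
Proof.
move=> mu_ij; rewrite !kidxE -[in RHS](card_preim_perm (sgen i)).
apply: eq_card => m; rewrite !inE !cact_sgenE.
have [e|//] := eqVneq (mu (sgen i l)) (mu (sgen i m)).
by rewrite /= ltn_sgen // => -[el em]; move: e mu_ij;
  rewrite el em /sgen tpermL tpermR => ->; rewrite eqxx.
Qed.

Lemma tilde_nextI_eq (nu : 'X_{1..n}) :
  nu i = nu (nextI i) -> tilde nu (nextI i) = tK * tilde nu i.
Proof.
move=> e; rewrite /tilde (kidx_sgen_eq e) -e exprS invfM.
by rewrite mulrCA (mulrA tK) mulfV ?tK_neq0 // mul1r.
Qed.

Lemma tilde_nextI_neq (nu : 'X_{1..n}) : tilde nu i != tilde nu (nextI i).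
Proof.
apply/eqP => /qt_monomial_inj[e_nu e_k].
by have := kidx_sgen_eq e_nu; rewrite e_k; lia.
Qed.

Lemma tilde_cact_sgen (nu : 'X_{1..n}) : nu i != nu (nextI i) ->
  tilde (cact (sgen i) nu) =1 tilde nu \o sgen i.
Proof. by move=> nu_ij l; rewrite /tilde /= cact_sgenE kidx_cact_sgen. Qed.

Lemma msize_Tdiv (f : {mpoly K[n]}) : (msize (Tdiv i f) <= msize f)%N.
Proof.
have u_size : (2 <= msize ('X_i - 'X_(nextI i) : {mpoly K[n]}))%N.
  by rewrite msize_XU_subr_ge // eq_sym nextI_neq.
have u_neq0 : ('X_i - 'X_(nextI i) : {mpoly K[n]}) != 0.
  by rewrite -msize_poly_eq0 -lt0n (leq_trans _ u_size).
have v_size := leq_trans (msize_scaleXU_subr_le tK i (nextI i)) u_size.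
apply: leq_trans (msize_le_of_mul_eq (Tdiv_spec i f) u_neq0 v_size) _.
rewrite (leq_trans (msizeD_le _ _)) // msizeN geq_max leqnn; exact: msize_msym.
Qed.

Lemma inVstar_Top (lam : 'X_{1..n}) (f : {mpoly K[n]}) :
  inVstar lam f -> inVstar lam (Top i f).
Proof.
move=> [f_deg f_van]; split.
  rewrite /deg_le (leq_trans (msizeD_le _ _)) // msizeN geq_max.
  by rewrite (leq_trans (msizeZ_le _ _) f_deg) (leq_trans (msize_Tdiv f) f_deg).
move=> nu nu_deg nu_out; set x := tilde nu.
rewrite /Top mevalB mevalZ meval_Tdiv ?tilde_nextI_neq // f_van // mulr0 sub0r sub0r.
suff vanish : (tK * x i - x (nextI i)) * f.@[x \o sgen i] = 0.
  by rewrite mulrN vanish oppr0 mul0r oppr0.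
have [nu_ij|nu_ij] := eqVneq (nu i) (nu (nextI i)).
  by rewrite /x tilde_nextI_eq // subrr mul0r.
rewrite -(meval_eq _ (tilde_cact_sgen nu_ij)) f_van ?mulr0 ?mdeg_cact //.
by move/cact_orbit.
Qed.

End AdjacentTransposition.

Lemma inVstar_Tword n (lam : 'X_{1..n}) (w : seq 'I_n) (f : {mpoly K[n]}) :
  valid_word w -> inVstar lam f -> inVstar lam (Tword w f).
Proof.
elim: w => [|a w IHw] //= /andP[lt_a1n valid_w] f_in.
exact: inVstar_Top (IHw valid_w f_in).
Qed.

Lemma Estar_inVstar n (lam : 'X_{1..n}) (E : {mpoly K[n]}) :
  is_Estar lam E -> inVstar lam E.
Proof.
case=> E_deg _ E_van; split=> // nu nu_deg nu_out; apply: E_van => //.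
by apply/eqP => nu_lam; apply: nu_out; exists 1%g; rewrite cact1 nu_lam.
Qed.

Unset Implicit Arguments.

Theorem lemma2p9 (n : nat) (lam mu : 'X_{1..n}) (E : {mpoly K[n]})
  (sigma : 'S_n) (w : seq 'I_n) :
  is_partition lam ->
  (exists s : 'S_n, cact s lam = mu) ->
  is_Estar lam E ->
  is_sigma_mu lam mu sigma ->
  reduced_word sigma w ->
  inVstar lam (Tword w E).
Proof.
move=> _ _ E_star _ [valid_w _ _].
exact: inVstar_Tword valid_w (Estar_inVstar E_star).
Qed.
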